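(* Consider $n$ sub-populations with constant sizes $N_i>0$ and constant nonnegative flows $F_{ij}\ge 0$ ($i\neq j$; $F_{ij}$ is the number of individuals per unit time flowing from sub-population $j$ to sub-population $i$, $F_{ii}=0$), and the dynamics, for $i\in[n]$, \begin{align*} \dot s_i &= \alpha_i r_i-\beta_i x_i s_i+\tfrac{1}{N_i}\textstyle\sum_{j\neq i}(F_{ij}s_j-F_{ji}s_i),\\ \dot e_i &= \beta_i x_i s_i-\sigma_i e_i+\tfrac{1}{N_i}\textstyle\sum_{j\neq i}(F_{ij}e_j-F_{ji}e_i),\\ \dot x_i &= \sigma_i e_i-\delta_i x_i+\tfrac{1}{N_i}\textstyle\sum_{j\neq i}(F_{ij}x_j-F_{ji}x_i),\\ \dot r_i &= \delta_i x_i-\alpha_i r_i+\tfrac{1}{N_i}\textstyle\sum_{j\neq i}(F_{ij}r_j-F_{ji}r_i). \end{align*} Assume (A1) for every $j\in[n]$, $\sum_{i\neq j}F_{ji}=\sum_{i\neq j}F_{ij}$ (total inflow into $j$ equals total outflow from $j$); and (A2) $\alpha_i,\beta_i,\sigma_i,\delta_i>0$ for all $i$, and the initial values at time $t_0\ge 0$ satisfy $s_i(t_0),e_i(t_0),x_i(t_0),r_i(t_0)\in[0,1]$ and $s_i(t_0)+e_i(t_0)+x_i(t_0)+r_i(t_0)=1$ for all $i\in[n]$. Then $s_i(t),e_i(t),x_i(t),r_i(t)\in[0,1]$ and $s_i(t)+e_i(t)+x_i(t)+r_i(t)=1$ for all $i\in[n]$ and all $t\ge 0$.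
   Context: This is a networked SEIRS epidemic model: $s_i,e_i,x_i,r_i$ are the proportions of susceptible, exposed, infected and recovered individuals in sub-population $i$; $\beta_i$ is the infection rate, $\sigma_i$ the exposed-to-infected rate, $\delta_i$ the healing rate, $\alpha_i$ the rate of immunity loss. *)

From HB Require Import structures.
From mathcomp Require Import all_boot all_order all_algebra.
From mathcomp Require Import all_classical all_reals all_analysis.
Set Implicit Arguments. Unset Strict Implicit. Unset Printing Implicit Defensive.
Import Order.TTheory GRing.Theory Num.Theory.
Import numFieldNormedType.Exports.
Local Open Scope classical_set_scope.
Local Open Scope ring_scope.

Definition flow_term (R : realType) (n : nat) (N : 'I_n -> R)
  (F : 'I_n -> 'I_n -> R) (y : 'I_n -> R -> R) (i : 'I_n) (t : R) : R :=
  (N i)^-1 * \sum_(j < n | j != i) (F i j * y j t - F j i * y i t).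

(* (s, e, x, r) solves the networked SEIRS system for t > t0, and each
   component is continuous on [t0, +oo) (so the initial value at t0 is attained). *)
Definition SEIRS_solution (R : realType) (n : nat) (N : 'I_n -> R)
  (F : 'I_n -> 'I_n -> R) (alpha beta sigma delta : 'I_n -> R)
  (t0 : R) (s e x r : 'I_n -> R -> R) : Prop :=
  (forall i : 'I_n,
     {within `[t0, +oo[, continuous (s i)} /\
     {within `[t0, +oo[, continuous (e i)} /\
     {within `[t0, +oo[, continuous (x i)} /\
     {within `[t0, +oo[, continuous (r i)}) /\
  (forall (i : 'I_n) (t : R), t0 < t ->
     is_derive t 1 (s i)
       (alpha i * r i t - beta i * x i t * s i t + flow_term N F s i t) /\
     is_derive t 1 (e i)
       (beta i * x i t * s i t - sigma i * e i t + flow_term N F e i t) /\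
     is_derive t 1 (x i)
       (sigma i * e i t - delta i * x i t + flow_term N F x i t) /\
     is_derive t 1 (r i)
       (delta i * x i t - alpha i * r i t + flow_term N F r i t)).

(** The total D_i = s_i + e_i + x_i + r_i - 1 solves the pure mobility system
    D' = flow(D): the reaction terms cancel and, by (A1), flows map constants to
    0.  Its only solution with D(t0) = 0 is 0, by the invariance principle below
    applied to D and -D.  The same principle gives nonnegativity of the 4n
    compartments, because the vector field is quasi-positive: when a compartment
    equals -eta while all others are >= -eta, its derivative is >= -M eta.  The
    principle itself is proved by perturbing with eps * exp(m t), m > M: at the
    first time a perturbed component vanishes its derivative would be positive,
    so it must have been negative just before. *)

From HB Require Import structures.
From mathcomp Require Import all_boot all_order all_algebra.
From mathcomp Require Import all_classical all_reals all_analysis.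
From mathcomp Require Import lra ring.

Set Implicit Arguments.
Unset Strict Implicit.
Unset Printing Implicit Defensive.

Import Order.TTheory GRing.Theory Num.Theory.
Import numFieldNormedType.Exports.
Local Open Scope classical_set_scope.
Local Open Scope ring_scope.

Lemma is_derive_gt0_left (R : realType) (f : R -> R) (t l d : R) :
  is_derive t 1 f l -> 0 < l -> 0 < d -> exists2 u, t - d < u < t & f u < f t.
Proof.
move=> /is_derive1_caratheodory[g [fgE gc <-]] g0 d0.
have /nbhs_ballP[e /= e0 ge] : \forall z \near t, 0 < g z by exact: cvgr_gt gc _ g0.
pose h := Num.min e d / 2.
have h0 : 0 < h by rewrite divr_gt0 // lt_min e0 d0.
have [me md] : Num.min e d <= e /\ Num.min e d <= d by rewrite !ge_min !lexx orbT.
have [he hd] : h < e /\ h < d by rewrite /h; split; lra.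
exists (t - h); first by apply/andP; split; lra.
have gh : 0 < g (t - h) by apply: ge; rewrite /ball /= opprB addrC subrK gtr0_norm.
by rewrite -subr_lt0 fgE addrAC subrr add0r mulrN oppr_lt0 mulr_gt0.
Qed.

Lemma mulr_ge_oppM (R : realDomainType) (a b c eta : R) : 0 <= c -> 0 <= eta ->
  - eta <= a -> a <= c -> - eta <= b -> b <= c -> - (c * eta) <= a * b.
Proof.
move=> c_ge0 eta_ge0 a_ge a_le b_ge b_le.
have [a_ge0|a_lt0] := leP 0 a; have [b_ge0|b_lt0] := leP 0 b; nra.
Qed.

Section FirstTouch.
Variables (R : realType) (I : finType) (w : I -> R -> R) (t0 : R).
Hypothesis w_cont : forall d, {within `[t0, +oo[, continuous (w d)}.

Let near_within_ball (P : R -> Prop) p :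
  (\forall u \near within `[t0, +oo[ (nbhs p), P u) ->
  exists2 e : R, 0 < e & forall u, t0 <= u -> `|p - u| < e -> P u.
Proof.
move=> /nbhs_ballP[e /= e0 He]; exists e => // u t0u pu.
by apply: He; rewrite /= ?in_itv /= ?t0u.
Qed.

Let w_cvg d p : t0 <= p -> w d u @[u --> within `[t0, +oo[ (nbhs p)] --> w d p.
Proof.
move=> t0p; apply: (proj1 (subspace_continuousP _ _) (@w_cont d)).
by rewrite /= in_itv /= t0p.
Qed.

Let near_gt0 p : t0 <= p -> (forall d, 0 < w d p) ->
  exists2 e : R, 0 < e & forall u, t0 <= u -> `|p - u| < e -> forall d, 0 < w d u.
Proof.
move=> t0p w_p; apply: near_within_ball; apply: filter_forall => d.
exact: cvgr_gt (@w_cvg d p t0p) _ (w_p d).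
Qed.

Let near_lt0 d p : t0 <= p -> w d p < 0 ->
  exists2 e : R, 0 < e & forall u, t0 <= u -> `|p - u| < e -> w d u < 0.
Proof.
by move=> t0p w_p; apply: near_within_ball; exact: cvgr_lt (@w_cvg d p t0p) _ w_p.
Qed.

Lemma first_touch t1 c1 : (forall d, 0 < w d t0) -> t0 <= t1 -> w c1 t1 <= 0 ->
  exists ts c, [/\ t0 < ts <= t1, w c ts = 0, forall d, 0 <= w d ts
                 & forall d u, t0 <= u < ts -> 0 < w d u].
Proof.
move=> w_t0 t0t1 wc1.
pose Z := [set u | t0 <= u <= t1 /\ exists c, w c u <= 0].
have Zt1 : Z t1 by split; [rewrite t0t1 lexx | exists c1].
have Zn : Z !=set0 by exists t1.
have Zlb : lbound Z t0 by move=> z [/andP[]].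
set ts := inf Z.
have ts_le z : Z z -> ts <= z by move=> Zz; apply: ge_inf => //; exists t0.
have t0ts : t0 <= ts by apply: lb_le_inf.
have before d u : t0 <= u < ts -> 0 < w d u.
  case/andP=> t0u uts; rewrite ltNge; apply/negP => wle.
  have Zu : Z u by split; [rewrite t0u (le_trans (ltW uts) (ts_le _ Zt1)) | exists d].
  by have := ts_le u Zu; rewrite leNgt uts.
have ts_gt p : t0 <= p <= ts -> (forall d, 0 < w d p) -> p < ts.
  case/andP=> t0p pts w_p; have [e e0 He] := near_gt0 t0p w_p.
  have [pets|tsp] := leP (p + e) ts; first lra.
  have [z Zz zlt] := inf_lt Zn tsp.
  have [/andP[t0z _] [c wc]] := Zz.
  have pz : `|p - z| < e.
    by have := ts_le z Zz => tsz; rewrite distrC ger0_norm; lra.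
  by have := He z t0z pz c; rewrite ltNge wc.
have t0_lt_ts : t0 < ts by apply: ts_gt; rewrite ?lexx.
have ts_ge0 d : 0 <= w d ts.
  rewrite leNgt; apply/negP => wlt.
  have [e e0 He] := near_lt0 t0ts wlt.
  pose u := ts - Num.min e (ts - t0) / 2.
  have [me mt] : Num.min e (ts - t0) <= e /\ Num.min e (ts - t0) <= ts - t0.
    by rewrite !ge_min !lexx orbT.
  have m0 : 0 < Num.min e (ts - t0) by rewrite lt_min e0 subr_gt0.
  have t0u : t0 <= u by rewrite /u; lra.
  have wu_neg : w d u < 0.
    by apply: He; rewrite // /u opprB addrC subrK ger0_norm; lra.
  have : 0 < w d u by apply: before; rewrite t0u /u; lra.
  lra.
have [c wc] : exists c, w c ts <= 0.
  apply: contrapT => no_c.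
  suff : ts < ts by rewrite ltxx.
  apply: ts_gt; first by rewrite t0ts lexx.
  by move=> d; rewrite ltNge; apply/negP => wle; apply: no_c; exists d.
exists ts, c; split => //; first by rewrite t0_lt_ts ts_le.
by apply: le_anti; rewrite wc ts_ge0.
Qed.
End FirstTouch.

Lemma is_derive_expRX (R : realType) (m : nat) (u : R) :
  is_derive u 1 (expR ^+ m : R -> R) (m%:R * expR u ^+ m).
Proof.
apply: is_derive_eq.
case: m => [|k]; first by rewrite !mul0r scale0r.
by rewrite exprSr mulrA.
Qed.

Section Invariance.
Variables (R : realType) (I : finType) (y dy : I -> R -> R) (M : I -> R) (t0 : R).
Hypothesis y_cont : forall d, {within `[t0, +oo[, continuous (y d)}.
Hypothesis y_t0 : forall d, 0 <= y d t0.
Hypothesis y_deriv : forall d t, t0 < t -> is_derive t 1 (y d) (dy d t).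
Hypothesis dy_boundary : forall c t eta, t0 < t -> 0 < eta <= 1 ->
  (forall d, - eta <= y d t) -> y c t = - eta -> - (M c * eta) <= dy c t.

Let m := Num.Def.archi_bound (\sum_c `|M c|).

Let M_lt_m c : M c < m%:R.
Proof.
apply: le_lt_trans (archi_boundP (sumr_ge0 _ (fun c _ => normr_ge0 (M c)))).
by rewrite (le_trans (ler_norm _)) // (bigD1 c) //= lerDl sumr_ge0.
Qed.

Let phi : R -> R := expR ^+ m.

Let phiE u : phi u = expR u ^+ m. Proof. by rewrite /phi exprfctE. Qed.

Let phi_gt0 u : 0 < phi u. Proof. by rewrite phiE exprn_gt0 ?expR_gt0. Qed.

Let phi_le u v : u <= v -> phi u <= phi v.
Proof. by move=> uv; rewrite !phiE lerXn2r ?nnegrE ?expR_ge0 ?ler_expR. Qed.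

Let phi_deriv (u : R) : is_derive u 1 phi (m%:R * phi u).
Proof. by rewrite phiE; exact: is_derive_expRX. Qed.

Let perturbed_gt0 eps t d : 0 < eps -> t0 <= t -> eps * phi t <= 1 ->
  0 < y d t + eps * phi t.
Proof.
move=> eps_gt0 t0t eps_phi_le1; rewrite ltNge; apply/negP => wdt.
pose w c := y c + eps \*: phi.
have wE c u : w c u = y c u + eps * phi u by [].
have w_cont c : {within `[t0, +oo[, continuous (w c)}.
  move=> p; apply: continuousD; first exact: y_cont.
  apply: continuousZl_tmp; apply: continuous_subspaceT => u.
  apply: differentiable_continuous; apply/derivable1_diffP.
  by case: (phi_deriv u).
have w_t0 c : 0 < w c t0.
  by rewrite wE; have := y_t0 c; have := mulr_gt0 eps_gt0 (phi_gt0 t0); lra.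
have [ts [c [/andP[t0ts tst] wc0 w_ts w_before]]] := first_touch w_cont w_t0 t0t wdt.
set eta := eps * phi ts.
have eta_gt0 : 0 < eta by rewrite mulr_gt0.
have eta_le1 : eta <= 1.
  exact: le_trans (ler_wpM2l (ltW eps_gt0) (phi_le tst)) eps_phi_le1.
have yc : y c ts = - eta by move: wc0; rewrite wE -/eta; lra.
have yd d' : - eta <= y d' ts by have := w_ts d'; rewrite wE -/eta; lra.
have dw : is_derive ts 1 (w c) (dy c ts + eps * (m%:R * phi ts)).
  exact: is_deriveD (y_deriv c t0ts) (is_deriveZ eps (phi_deriv ts)).
have dw_gt0 : 0 < dy c ts + eps * (m%:R * phi ts).
  have := dy_boundary t0ts _ yd yc; rewrite eta_gt0 eta_le1 => /(_ isT).
  have := mulr_gt0 (_ : 0 < m%:R - M c) eta_gt0.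
  rewrite subr_gt0 M_lt_m mulrBl mulrCA -/eta => /(_ isT); lra.
have ts_t0 : 0 < ts - t0 by rewrite subr_gt0.
have [u /andP[t0u uts] wu] := is_derive_gt0_left dw dw_gt0 ts_t0.
have : 0 < w c u by apply: w_before; rewrite uts andbT; lra.
by rewrite wc0 in wu; lra.
Qed.

Lemma nonneg_invariance d t : t0 <= t -> 0 <= y d t.
Proof.
move=> t0t; rewrite leNgt; apply/negP => yt_neg.
pose a := Num.min (- y d t) 1.
have [a_gt0 a_le_y a_le1] : [/\ 0 < a, a <= - y d t & a <= 1].
  by rewrite lt_min oppr_gt0 yt_neg ltr01 !ge_min !lexx orbT.
have eps_phi : a / 2 / phi t * phi t = a / 2 by rewrite divfK ?gt_eqF.
have := @perturbed_gt0 (a / 2 / phi t) t d.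
by rewrite !divr_gt0 // eps_phi => /(_ isT t0t); lra.
Qed.
End Invariance.

Section Flow.
Variables (R : realType) (n : nat) (N : 'I_n -> R) (F : 'I_n -> 'I_n -> R).
Hypothesis N_gt0 : forall i, 0 < N i.
Hypothesis F_ge0 : forall i j, i != j -> 0 <= F i j.

Definition inflow_rate i := (N i)^-1 * \sum_(j < n | j != i) F i j.

Lemma flow_term_ge (y : 'I_n -> R -> R) c t eta : 0 <= eta ->
  (forall j, - eta <= y j t) -> y c t = - eta ->
  - (inflow_rate c * eta) <= flow_term N F y c t.
Proof.
move=> eta_ge0 y_ge yc; rewrite /flow_term /inflow_rate -mulrA -mulrN.
apply: ler_wpM2l; first by rewrite invr_ge0 ltW.
rewrite mulr_suml -sumrN; apply: ler_sum => j jc.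
have Fcj : 0 <= F c j by rewrite F_ge0 // eq_sym.
have Fjc := F_ge0 jc; have := y_ge j.
rewrite yc; nra.
Qed.

Lemma flow_termD (y z : 'I_n -> R -> R) i t :
  flow_term N F (fun j => y j + z j) i t = flow_term N F y i t + flow_term N F z i t.
Proof.
rewrite /flow_term -mulrDr -big_split; congr (_ * _).
by apply: eq_bigr => j _; rewrite !fctE /=; ring.
Qed.

Lemma flow_termN (y : 'I_n -> R -> R) i t :
  flow_term N F (fun j => - y j) i t = - flow_term N F y i t.
Proof.
rewrite /flow_term -mulrN -sumrN; congr (_ * _).
by apply: eq_bigr => j _; rewrite !fctE /=; ring.
Qed.

Hypothesis F_balanced : forall j,
  \sum_(i < n | i != j) F j i = \sum_(i < n | i != j) F i j.

Lemma flow_term_cst (a : R) i t : flow_term N F (fun _ => cst a) i t = 0.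
Proof.
by rewrite /flow_term sumrB -!mulr_suml /= F_balanced subrr mulr0.
Qed.

Lemma flow_solution_eq0 (z : 'I_n -> R -> R) t0 :
  (forall i, {within `[t0, +oo[, continuous (z i)}) -> (forall i, z i t0 = 0) ->
  (forall i t, t0 < t -> is_derive t 1 (z i) (flow_term N F z i t)) ->
  forall i t, t0 <= t -> z i t = 0.
Proof.
move=> z_cont z_t0 z_deriv i t t0t.
have solution_ge0 (y : 'I_n -> R -> R) : (forall j, {within `[t0, +oo[, continuous (y j)}) ->
    (forall j, y j t0 = 0) ->
    (forall j u, t0 < u -> is_derive u 1 (y j) (flow_term N F y j u)) -> 0 <= y i t.
  move=> y_cont y_t0 y_deriv.
  have y_t0_ge0 j : 0 <= y j t0 by rewrite y_t0.
  apply: (nonneg_invariance y_cont y_t0_ge0 y_deriv _ i t0t) => c u eta _ /andP[eta_gt0 _].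
  exact: flow_term_ge (ltW eta_gt0).
apply/eqP; rewrite eq_le -oppr_ge0 solution_ge0 // andbT.
apply: (solution_ge0 (fun j => - z j)).
- by move=> j p; apply: continuousN; exact: z_cont.
- by move=> j; rewrite fctE z_t0 oppr0.
- move=> j u t0u; rewrite flow_termN; exact: is_deriveN (z_deriv j u t0u).
Qed.

End Flow.

Section SEIRS.
Variables (R : realType) (n : nat) (N : 'I_n -> R) (F : 'I_n -> 'I_n -> R).
Variables (alpha beta sigma delta : 'I_n -> R) (t0 : R) (s e x r : 'I_n -> R -> R).
Hypothesis N_gt0 : forall i, 0 < N i.
Hypothesis F_ge0 : forall i j, i != j -> 0 <= F i j.
Hypothesis F_balanced : forall j,
  \sum_(i < n | i != j) F j i = \sum_(i < n | i != j) F i j.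
Hypothesis rates_gt0 : forall i,
  0 < alpha i /\ 0 < beta i /\ 0 < sigma i /\ 0 < delta i.
Hypothesis init_ge0 : forall i,
  [/\ 0 <= s i t0, 0 <= e i t0, 0 <= x i t0 & 0 <= r i t0].
Hypothesis init_total : forall i, s i t0 + e i t0 + x i t0 + r i t0 = 1.
Hypothesis solution : SEIRS_solution N F alpha beta sigma delta t0 s e x r.

Lemma SEIRS_total_eq1 i t : t0 <= t -> s i t + e i t + x i t + r i t = 1.
Proof.
have [cont deriv] := solution.
pose z j := s j + e j + x j + r j - cst 1.
have zE j u : z j u = s j u + e j u + x j u + r j u - 1 by [].
move=> t0t; apply/eqP; rewrite -subr_eq0 -zE; apply/eqP.
apply: (flow_solution_eq0 N_gt0 F_ge0 _ _ _ i t0t).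
- move=> j p; have [cs [ce [cx cr]]] := cont j.
  apply: continuousB; last exact: cst_continuous.
  exact: continuousD (continuousD (continuousD (cs p) (ce p)) (cx p)) (cr p).
- by move=> j; rewrite zE init_total subrr.
- move=> j u t0u; have [ds [de [dx dr]]] := deriv j u t0u.
  rewrite /z (flow_termD N F (fun j => s j + e j + x j + r j)) !flow_termD.
  rewrite (flow_termN N F (fun _ => cst 1)) flow_term_cst // oppr0 addr0.
  apply: is_derive_eq; ring.
Qed.

Let compartment := (('I_n + 'I_n) + ('I_n + 'I_n))%type.

Let Y (k : compartment) : R -> R :=
  match k with
  | inl (inl i) => s i | inl (inr i) => e i | inr (inl i) => x i | inr (inr i) => r i
  end.

Let dY (k : compartment) (t : R) : R :=
  match k with
  | inl (inl i) => alpha i * r i t - beta i * x i t * s i t + flow_term N F s i t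
  | inl (inr i) => beta i * x i t * s i t - sigma i * e i t + flow_term N F e i t
  | inr (inl i) => sigma i * e i t - delta i * x i t + flow_term N F x i t
  | inr (inr i) => delta i * x i t - alpha i * r i t + flow_term N F r i t
  end.

(* The 4 bounds s_i and x_i, which are at most 1 + 3 eta <= 4 once the total is 1. *)
Let M (k : compartment) : R :=
  match k with
  | inl (inl i) => alpha i + beta i + inflow_rate N F i
  | inl (inr i) => 4 * beta i + inflow_rate N F i
  | inr (inl i) => sigma i + inflow_rate N F i
  | inr (inr i) => delta i + inflow_rate N F i
  end.

Let dY_boundary c t eta : t0 < t -> 0 < eta <= 1 ->
  (forall d, - eta <= Y d t) -> Y c t = - eta -> - (M c * eta) <= dY c t.
Proof.
move=> t0t /andP[eta_gt0 eta_le1] Y_ge.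
have eta_le1' : 0 <= 1 - eta by rewrite subr_ge0.
have [ys ye yx yr] : [/\ forall j, - eta <= s j t, forall j, - eta <= e j t,
    forall j, - eta <= x j t & forall j, - eta <= r j t].
  by split=> j; [exact: (Y_ge (inl (inl j))) | exact: (Y_ge (inl (inr j)))
                | exact: (Y_ge (inr (inl j))) | exact: (Y_ge (inr (inr j)))].
have flow_ge := flow_term_ge N_gt0 F_ge0 (ltW eta_gt0).
case: c => [[i|i]|[i|i]] /= Yc; have [a_gt0 [b_gt0 [s_gt0 d_gt0]]] := rates_gt0 i.
- have := flow_ge _ _ _ ys Yc; rewrite Yc.
  have := ler_wpM2l (ltW a_gt0) (yr i).
  have := ler_wpM2l (mulr_ge0 (ltW b_gt0) (ltW eta_gt0)) (yx i).
  have := mulr_ge0 (mulr_ge0 (ltW b_gt0) (ltW eta_gt0)) eta_le1'.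
  nra.
- have := flow_ge _ _ _ ye Yc; rewrite Yc.
  have total := SEIRS_total_eq1 i (ltW t0t).
  have [x_le4 s_le4] : x i t <= 4 /\ s i t <= 4.
    by have := ys i; have := yx i; have := yr i; rewrite Yc in total; split; lra.
  have := mulr_ge_oppM (ler0n _ 4) (ltW eta_gt0) (yx i) x_le4 (ys i) s_le4.
  move/(ler_wpM2l (ltW b_gt0)).
  have := mulr_gt0 s_gt0 eta_gt0.
  nra.
- have := flow_ge _ _ _ yx Yc; rewrite Yc.
  have := ler_wpM2l (ltW s_gt0) (ye i).
  have := mulr_gt0 d_gt0 eta_gt0.
  nra.
- have := flow_ge _ _ _ yr Yc; rewrite Yc.
  have := ler_wpM2l (ltW d_gt0) (yx i).
  have := mulr_gt0 a_gt0 eta_gt0.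
  nra.
Qed.

Lemma SEIRS_ge0 i t : t0 <= t -> [/\ 0 <= s i t, 0 <= e i t, 0 <= x i t & 0 <= r i t].
Proof.
have [cont deriv] := solution.
have Y_cont k : {within `[t0, +oo[, continuous (Y k)}.
  by case: k => [[j|j]|[j|j]]; have [? [? [? ?]]] := cont j.
have Y_t0 k : 0 <= Y k t0 by case: k => [[j|j]|[j|j]]; case: (init_ge0 j).
have Y_deriv k u : t0 < u -> is_derive u 1 (Y k) (dY k u).
  by case: k => [[j|j]|[j|j]] t0u; have [? [? [? ?]]] := deriv j u t0u.
have Y_ge0 := nonneg_invariance Y_cont Y_t0 Y_deriv dY_boundary.
move=> t0t; split; [exact: (Y_ge0 (inl (inl i))) | exact: (Y_ge0 (inl (inr i)))
                  | exact: (Y_ge0 (inr (inl i))) | exact: (Y_ge0 (inr (inr i)))].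
Qed.

End SEIRS.

Theorem lemma5 (R : realType) (n : nat) (N : 'I_n -> R)
  (F : 'I_n -> 'I_n -> R) (alpha beta sigma delta : 'I_n -> R)
  (t0 : R) (s e x r : 'I_n -> R -> R) :
  (forall i : 'I_n, 0 < N i) ->
  (forall i j : 'I_n, i != j -> 0 <= F i j) ->
  (forall i : 'I_n, F i i = 0) ->
  (* (A1) balanced flows *)
  (forall j : 'I_n,
     \sum_(i < n | i != j) F j i = \sum_(i < n | i != j) F i j) ->
  (* (A2) positive rates *)
  (forall i : 'I_n, 0 < alpha i /\ 0 < beta i /\ 0 < sigma i /\ 0 < delta i) ->
  0 <= t0 ->
  (forall i : 'I_n,
     0 <= s i t0 <= 1 /\ 0 <= e i t0 <= 1 /\ 0 <= x i t0 <= 1 /\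
     0 <= r i t0 <= 1 /\ s i t0 + e i t0 + x i t0 + r i t0 = 1) ->
  SEIRS_solution N F alpha beta sigma delta t0 s e x r ->
  forall (i : 'I_n) (t : R), t0 <= t ->
     0 <= s i t <= 1 /\ 0 <= e i t <= 1 /\ 0 <= x i t <= 1 /\
     0 <= r i t <= 1 /\ s i t + e i t + x i t + r i t = 1.
Proof.
move=> N_gt0 F_ge0 _ F_balanced rates_gt0 _ init solution i t t0t.
have init_ge0 j : [/\ 0 <= s j t0, 0 <= e j t0, 0 <= x j t0 & 0 <= r j t0].
  by have [/andP[? _] [/andP[? _] [/andP[? _] [/andP[? _] _]]]] := init j.
have init_total j : s j t0 + e j t0 + x j t0 + r j t0 = 1 by case: (init j) => _ [_ [_ [_]]].
have total := SEIRS_total_eq1 N_gt0 F_ge0 F_balanced init_total solution i t0t.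
have [s_ge0 e_ge0 x_ge0 r_ge0] :=
  SEIRS_ge0 N_gt0 F_ge0 F_balanced rates_gt0 init_ge0 init_total solution i t0t.
by rewrite s_ge0 e_ge0 x_ge0 r_ge0 total; split; [|split; [|split; [|split]]]; lra.
Qed.
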